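(* Consider the discrete all-pay auction in the model without ties, with values drawn i.i.d. from a distribution with full support on $X$. Let $\beta$ be a symmetric equilibrium bidding function, let $v\in X$ with $v+1\in X$, and let $b=\beta(v)$. Then $\beta(v+1)\le b+1$.
   Context: Model. There are $n\ge 2$ risk-neutral bidders competing for one indivisible object. Normalise the grid so that values and bids lie in $X=\{0,1,2,\dots,x\}$ for some $x\in\mathbb N$. Each bidder $i$ privately learns a value $v_i\in X$; values are drawn independently from a common distribution in which every element of $X$ has strictly positive probability. Each bidder submits a bid $b_i\in X$. A (pure) strategy is a bidding function $\beta:X\to X$. In the model without ties, bidder $i$ wins iff $b_i>b_j$ for all $j\neq i$ (if the highest bid is tied, nobody wins). In the all-pay auction, a bidder with value $v_i$ bidding $b_i$ gets expected payoff $v_i\Pr(i\text{ wins})-b_i$ (everyone pays their bid). An equilibrium is a profile of bidding functions such that each bidder's bidding function maximises their expected payoff given the others' bidding functions (a pure-strategy Bayes–Nash equilibrium) and such that no bidder uses a weakly dominated bidding function (a bidding function is weakly dominated if some other bidding function yields at least as high expected payoff against every profile of opponents' bidding functions, and strictly higher against some). A symmetric equilibrium (SE) is an equilibrium in which all bidders use the same bidding function $\beta$. *)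

From mathcomp Require Import all_boot all_order all_algebra.
Set Implicit Arguments. Unset Strict Implicit. Unset Printing Implicit Defensive.
Import Order.TTheory GRing.Theory Num.Theory.
Local Open Scope ring_scope.

(* Grid X = {0,...,x} is 'I_x.+1; values and bids live in it. *)

Definition bidfun (x : nat) := 'I_x.+1 -> 'I_x.+1.
Definition profile (n x : nat) := 'I_n -> bidfun x.

(* model without ties: i wins iff its bid is strictly above all others *)
Definition wins (n : nat) (bids : 'I_n -> nat) (i : 'I_n) : bool :=
  [forall j : 'I_n, (j != i) ==> (bids j < bids i)%N].

Definition allpay_payoff (R : realFieldType) (n x : nat) (p : 'I_x.+1 -> R)
    (prof : profile n x) (i : 'I_n) : R :=
  \sum_(v : {ffun 'I_n -> 'I_x.+1})
     (\prod_(j : 'I_n) p (v j)) *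
     ((nat_of_ord (v i))%:R * (wins (fun j => nat_of_ord (prof j (v j))) i)%:R
      - (nat_of_ord (prof i (v i)))%:R).

Definition upd (n x : nat) (prof : profile n x) (i : 'I_n) (b : bidfun x)
  : profile n x := fun j => if j == i then b else prof j.

Definition weakly_dominated (R : realFieldType) (n x : nat) (p : 'I_x.+1 -> R)
    (i : 'I_n) (b : bidfun x) : Prop :=
  exists b' : bidfun x,
    (forall prof : profile n x,
        allpay_payoff p (upd prof i b) i <= allpay_payoff p (upd prof i b') i) /\
    (exists prof : profile n x,
        allpay_payoff p (upd prof i b) i < allpay_payoff p (upd prof i b') i).

Definition equilibrium (R : realFieldType) (n x : nat) (p : 'I_x.+1 -> R)
    (prof : profile n x) : Prop :=
  (forall (i : 'I_n) (b' : bidfun x),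
      allpay_payoff p (upd prof i b') i <= allpay_payoff p prof i) /\
  (forall i : 'I_n, ~ weakly_dominated p i (prof i)).

Definition symmetric_equilibrium (R : realFieldType) (n x : nat)
    (p : 'I_x.+1 -> R) (beta : bidfun x) : Prop :=
  equilibrium p (fun _ : 'I_n => beta).

From mathcomp Require Import all_boot all_order all_algebra.
From mathcomp Require Import ring lra zify.
Set Implicit Arguments. Unset Strict Implicit. Unset Printing Implicit Defensive.
Import Order.TTheory GRing.Theory Num.Theory.
Local Open Scope ring_scope.

(* Fix the symmetric profile in which every opponent bids
   according to beta, and let F c be the probability that an opponent bids
   below c and W c = F c ^ (n-1) the probability that a bid c wins.  Expanding
   the product measure shows that the ex-ante payoff of a bidder using b is
   sum_u p u * (u * W (b u) - b u); since every type has positive probability,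
   in equilibrium each type u maximises its interim payoff u * W c - c over
   bids c.  Two consequences are proved from this interim optimality:
   - single crossing: a type bidding strictly less than another type is
     strictly smaller (since W is nondecreasing);
   - no gaps: if some type bids c + 1, some type bids c (otherwise W c.+1 =
     W c and bidding c is strictly better).
   If beta (v+1) >= beta v + 2, the bid beta (v+1) - 1 is used by some type w,
   and single crossing forces v < w < v + 1, a contradiction. *)

Lemma prod_indicator (R : comPzSemiRingType) (I : finType) (P b : pred I) :
  \prod_(j | P j) (b j)%:R = ([forall j, P j ==> b j]%:R : R).
Proof.
case: (boolP [forall j, P j ==> b j]) => [/forallP allb | ].
  by rewrite big1 // => j Pj; rewrite (implyP (allb j) Pj).
rewrite negb_forall => /existsP [j]; rewrite negb_imply => /andP [Pj /negbTE bj].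
by rewrite (bigD1 j Pj) /= bj mul0r.
Qed.

Lemma single_crossing (R : realFieldType) (a a' W1 W2 c1 c2 : R) :
  W1 <= W2 -> c1 < c2 ->
  a * W2 - c2 <= a * W1 - c1 -> a' * W1 - c1 <= a' * W2 - c2 -> a <= a'.
Proof.
move=> leW ltc pref_a pref_a'.
have ltW : W1 < W2.
  rewrite lt_neqAle leW andbT; apply/eqP => eqW.
  by move: pref_a'; rewrite eqW; lra.
nra.
Qed.

Section SymmetricAllPay.
Variables (R : realFieldType) (n x : nat) (p : 'I_x.+1 -> R).
Variable beta : bidfun x.

Definition below_prob (c : nat) : R :=
  \sum_(w : 'I_x.+1) p w * (beta w < c)%N%:R.

Definition win_prob (c : nat) : R := below_prob c ^+ n.-1.

Definition interim (u c : nat) : R := u%:R * win_prob c - c%:R.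

Definition beats_all (i : 'I_n) (v : {ffun 'I_n -> 'I_x.+1}) (c : nat) : bool :=
  [forall j : 'I_n, (j != i) ==> (beta (v j) < c)%N].

(* product weight of the event "v i = u and bidder i wins with bid c",
   written factor by factor so that sums over profiles factorise *)
Definition win_weight (i : 'I_n) (u : 'I_x.+1) (c : nat) (j : 'I_n)
    (w : 'I_x.+1) : R :=
  if j == i then (w == u)%:R * p w else p w * (beta w < c)%N%:R.

Lemma win_weightE i u c (v : {ffun 'I_n -> 'I_x.+1}) :
  \prod_j win_weight i u c j (v j)
  = (v i == u)%:R * (\prod_j p (v j)) * (beats_all i v c)%:R.
Proof.
rewrite (bigD1 i) //= [X in _ = _ * X * _](bigD1 i) //= /win_weight eqxx.
rewrite (eq_bigr (fun j => p (v j) * (beta (v j) < c)%N%:R)); last first.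
  by move=> j /negbTE ->.
rewrite big_split /= prod_indicator /beats_all; ring.
Qed.

Lemma sum_win_weight i u c :
  \sum_(v : {ffun 'I_n -> 'I_x.+1}) \prod_j win_weight i u c j (v j)
  = p u * win_prob c.
Proof.
rewrite -bigA_distr_bigA (bigD1 i) //=.
rewrite [X in _ * X = _](eq_bigr (fun _ => below_prob c)); last first.
  by move=> j ji; rewrite /win_weight (negbTE ji).
rewrite prodr_const cardC1 card_ord /win_weight eqxx (bigD1 u) //= eqxx mul1r.
by rewrite big1 ?addr0 // => w /negbTE ->; rewrite mul0r.
Qed.

Hypothesis p_sum1 : \sum_w p w = 1.

Lemma win_prob_top : win_prob x.+1 = 1.
Proof.
rewrite /win_prob -[RHS](expr1n _ n.-1) -p_sum1; congr (_ ^+ _).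
by apply: eq_bigr => w _; rewrite ltn_ord mulr1.
Qed.

Lemma payoff_integrand i (prof : profile n x) u (v : {ffun 'I_n -> 'I_x.+1}) :
  (forall j, j != i -> prof j = beta) ->
  (if v i == u then (\prod_j p (v j)) *
     ((v i)%:R * (wins (fun j => nat_of_ord (prof j (v j))) i)%:R
      - (prof i (v i))%:R) else 0)
  = u%:R * \prod_j win_weight i u (prof i u) j (v j)
    - (prof i u)%:R * \prod_j win_weight i u x.+1 j (v j).
Proof.
move=> others; rewrite !win_weightE.
have -> : beats_all i v x.+1 by apply/forallP => j; rewrite ltn_ord implybT.
case: eqP => [viu | _]; last by rewrite !mul0r !mulr0 subrr.
have -> : wins (fun j => nat_of_ord (prof j (v j))) i = beats_all i v (prof i u).
  apply: eq_forallb => j; case: eqP => [// | /eqP ji] /=.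
  by rewrite others // viu.
by rewrite viu -[true%:R]/(1 : R); ring.
Qed.

Lemma payoff_interim i (prof : profile n x) :
  (forall j, j != i -> prof j = beta) ->
  allpay_payoff p prof i = \sum_u p u * interim u (prof i u).
Proof.
move=> others; rewrite /allpay_payoff.
rewrite (partition_big (fun v : {ffun 'I_n -> 'I_x.+1} => v i) predT) //=.
apply: eq_bigr => u _; rewrite big_mkcond /=.
under eq_bigr => v _ do rewrite payoff_integrand //.
rewrite big_split /= sumrN -!mulr_sumr !sum_win_weight win_prob_top /interim.
ring.
Qed.

Hypothesis p_pos : forall w, 0 < p w.
Hypothesis n_gt0 : (0 < n)%N.
Hypothesis eq_beta : symmetric_equilibrium n p beta.

Lemma interim_optimal (u c : 'I_x.+1) : interim u c <= interim u (beta u).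
Proof.
have [best_reply _] := eq_beta; pose i := Ordinal n_gt0.
pose dev := fun w => if w == u then c else beta w.
have := best_reply i dev.
rewrite (@payoff_interim i) => [| j ji]; last by rewrite /upd (negbTE ji).
rewrite (@payoff_interim i) // /upd eqxx.
have same_elsewhere : \sum_(w | w != u) p w * interim w (dev w)
                      = \sum_(w | w != u) p w * interim w (beta w).
  by apply: eq_bigr => w /negbTE wu; rewrite /dev wu.
rewrite (bigD1 u) //= [X in _ <= X](bigD1 u) //= /dev eqxx -/dev.
by rewrite same_elsewhere lerD2r ler_pM2l.
Qed.

Lemma win_prob_mono c1 c2 : (c1 <= c2)%N -> win_prob c1 <= win_prob c2.
Proof.
move=> le12; have below_ge0 c : 0 <= below_prob c.
  by apply: sumr_ge0 => w _; rewrite mulr_ge0 // ltW.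
apply: lerXn2r; rewrite ?nnegrE //.
apply: ler_sum => w _; rewrite ler_wpM2l ?(ltW (p_pos w)) // ler_nat.
by case: ltnP => //= lt1; rewrite lt0b (leq_trans lt1 le12).
Qed.

Lemma types_ordered (u u' : 'I_x.+1) : (beta u < beta u')%N -> (u < u')%N.
Proof.
move=> lt_bids; rewrite ltn_neqAle; apply/andP; split.
  by apply: contraTneq lt_bids => /val_inj ->; rewrite ltnn.
rewrite -(ler_nat R).
apply: (@single_crossing R u%:R u'%:R (win_prob (beta u)) (win_prob (beta u'))
  (beta u)%:R (beta u')%:R).
- exact/win_prob_mono/ltnW.
- by rewrite ltr_nat.
- exact: interim_optimal.
- exact: interim_optimal.
Qed.

Lemma used_bid_below (u : 'I_x.+1) :
  (0 < beta u)%N -> exists w, nat_of_ord (beta w) = (beta u).-1.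
Proof.
move=> bid_pos.
case: (pickP (fun w => nat_of_ord (beta w) == (beta u).-1)) => [w /eqP | unused].
  by exists w.
have no_mass : win_prob (beta u) = win_prob (beta u).-1.
  rewrite /win_prob /below_prob; congr (_ ^+ _); apply: eq_bigr => w _.
  by rewrite -{1}(prednK bid_pos) ltnS leq_eqVlt unused.
have c_lt : ((beta u).-1 < x.+1)%N by rewrite (leq_ltn_trans (leq_pred _)).
have := interim_optimal u (Ordinal c_lt).
by rewrite /interim /= no_mass lerD2l lerN2 ler_nat leqNgt ltn_predL bid_pos.
Qed.

End SymmetricAllPay.

Theorem lemma10 (R : realFieldType) (n x : nat) (p : 'I_x.+1 -> R)
  (beta : 'I_x.+1 -> 'I_x.+1) (v : 'I_x.+1) :
  (2 <= n)%N ->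
  (forall w, 0 < p w) ->
  \sum_(w : 'I_x.+1) p w = 1 ->
  symmetric_equilibrium n p beta ->
  (v < x)%N ->
  (nat_of_ord (beta (inord v.+1)) <= (nat_of_ord (beta v)).+1)%N.
Proof.
move=> n_ge2 p_pos p_sum1 eq_beta v_lt; rewrite leqNgt; apply/negP => jump.
have n_gt0 : (0 < n)%N by lia.
have ordered := types_ordered p_sum1 p_pos n_gt0 eq_beta.
set v1 : 'I_x.+1 := inord v.+1 in jump *.
have v1E : nat_of_ord v1 = v.+1 by rewrite inordK.
have [w bid_w] : exists w, nat_of_ord (beta w) = (beta v1).-1.
  by apply: used_bid_below p_sum1 p_pos n_gt0 eq_beta _ _; lia.
have v_lt_w : (v < w)%N by apply: ordered; rewrite bid_w; lia.
have w_lt_v1 : (w < v1)%N by apply: ordered; rewrite bid_w; lia.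
lia.
Qed.
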